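(* Let $\phi:(G,L_G)\to(H,L_H)$ be a p-bounded homomorphism of groups with word-length functions. If the induced map $\phi_1:H_1(G;\mathbb Q)\to H_1(H;\mathbb Q)$ and the map $\alpha_1(H,L_H)$ are injective, then $\alpha_1(G,L_G)$ is injective.
   Context: $\phi$ is p-bounded if there is a polynomial $p$ with $L_H(\phi(g))\le p(L_G(g))$ for all $g\in G$. For a group $G$ with word-length function $L$, $PH^*(G;\mathbb Q)$ is the cohomology of the subcomplex of the bar cochain complex $\mathrm{Hom}_G(C_*(EG;\mathbb Q),\mathbb Q)$ consisting of $G$-equivariant cochains $\psi$ with $|\psi(1,g_1,\dots,g_n)|\le C(1+\sum_iL(g_i))^k$ for some constants $C,k$ (extended linearly). The inclusion induces $\eta:PH^*(G;\mathbb Q)\to H^*(G;\mathbb Q)$, and $\alpha_*(G,L)$ is the composite $H_*(G;\mathbb Q)\to(H^*(G;\mathbb Q))^*\xrightarrow{\eta^*}(PH^*(G;\mathbb Q))^*$ of the universal-coefficient map and the dual of $\eta$. *)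

From HB Require Import structures.
From mathcomp Require Import all_boot all_order all_algebra.
From mathcomp Require Import monoid.
From Stdlib Require Import Reals.
From mathcomp Require Import Rstruct.

Set Implicit Arguments.
Unset Strict Implicit.
Unset Printing Implicit Defensive.

Import Order.TTheory GRing.Theory Num.Theory.

Local Open Scope ring_scope.

Definition word_length (G : groupType) (L : G -> R) : Prop :=
  [/\ forall g, 0 <= L g,
      L 1%g = 0,
      forall g, L (g^-1)%g = L g
    & forall g h, L (g * h)%g <= L g + L h].

Definition group_hom (G H : groupType) (phi : G -> H) : Prop :=
  forall x y, phi (x * y)%g = (phi x * phi y)%g.

Definition p_bounded (G H : groupType) (LG : G -> R) (LH : H -> R)
    (phi : G -> H) : Prop :=
  exists p : {poly R}, forall g, LH (phi g) <= p.[LG g].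

(* C_n(EG;Q) is the Q-vector space on (n+1)-tuples (g_0,...,g_n) with
   the diagonal G-action.  Every G-orbit contains exactly one tuple
   (1,h_1,...,h_n); we therefore represent an element of
   C_n(EG;Q) (x)_G Q by a formal finite sum  sum_j a_j [1,h^j]  encoded
   as a list of pairs (a_j, [:: h^j_1; ...; h^j_n]). *)

Definition chain (G : groupType) := seq (rat * seq G).

Definition is_chain (G : groupType) (n : nat) (c : chain G) : bool :=
  all (fun p => size p.2 == n) c.

Definition coef (G : groupType) (c : chain G) (h : seq G) : rat :=
  \sum_(p <- c | p.2 == h) p.1.

Definition chain_eq (G : groupType) (c d : chain G) : Prop :=
  forall h, coef c h = coef d h.

Definition chain_opp (G : groupType) (c : chain G) : chain G :=
  [seq (- p.1, p.2) | p <- c].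

Definition chain_sub (G : groupType) (c d : chain G) : chain G :=
  c ++ chain_opp d.

(** i-th face of (1,h_1,...,h_n), written back in normal form:
    face 0 drops the entry 1, giving (h_1,...,h_n) ~ (1,h_1^-1 h_2,...,h_1^-1 h_n);
    face i (i >= 1) drops h_i. *)
Definition face (G : groupType) (i : nat) (h : seq G) : seq G :=
  match i with
  | 0 => match h with
         | [::] => [::]
         | h1 :: t => [seq (h1^-1 * x)%g | x <- t]
         end
  | i'.+1 => take i' h ++ drop i h
  end.

Definition bd (G : groupType) (c : chain G) : chain G :=
  flatten [seq [seq ((-1) ^+ i * p.1, face i p.2) | i <- iota 0 (size p.2).+1]
          | p <- c].

Definition is_cycle (G : groupType) (n : nat) (c : chain G) : Prop :=
  is_chain n c /\ chain_eq (bd c) [::].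

Definition is_boundary (G : groupType) (n : nat) (c : chain G) : Prop :=
  exists b : chain G, is_chain n.+1 b /\ chain_eq (bd b) c.

(** An equivariant cochain psi is determined by the values
    psi(1,h_1,...,h_n); we encode it by h |-> psi(1,h). *)
Definition cochain (G : groupType) := seq G -> rat.

Definition pair (G : groupType) (psi : cochain G) (c : chain G) : rat :=
  \sum_(p <- c) p.1 * psi p.2.

Definition is_cocycle (G : groupType) (n : nat) (psi : cochain G) : Prop :=
  forall h : seq G, size h = n.+1 -> pair psi (bd [:: (1, h)]) = 0.

Definition poly_bounded (G : groupType) (L : G -> R) (n : nat)
    (psi : cochain G) : Prop :=
  exists (C : R) (k : nat), forall h : seq G, size h = n ->
    `| ratr (psi h) : R | <= C * (1 + \sum_(g <- h) L g) ^+ k.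

(** alpha_n(G,L) : H_n(G;Q) -> (PH^n(G;Q))^*, [c] |-> ([psi] |-> <psi,c>),
    is injective: two n-cycles with the same pairing against every
    polynomially bounded n-cocycle are homologous. *)
Definition alpha_injective (G : groupType) (L : G -> R) (n : nat) : Prop :=
  forall c d : chain G, is_cycle n c -> is_cycle n d ->
    (forall psi : cochain G, is_cocycle n psi -> poly_bounded L n psi ->
       pair psi c = pair psi d) ->
    is_boundary n (chain_sub c d).

Definition chain_map (G H : groupType) (phi : G -> H) (c : chain G) : chain H :=
  [seq (p.1, [seq phi x | x <- p.2]) | p <- c].

Definition induced_injective (G H : groupType) (phi : G -> H) (n : nat) : Prop :=
  forall c d : chain G, is_cycle n c -> is_cycle n d ->
    is_boundary n (chain_sub (chain_map phi c) (chain_map phi d)) ->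
    is_boundary n (chain_sub c d).

From mathcomp Require Import all_boot all_order all_algebra.
From mathcomp Require Import monoid.
From Stdlib Require Import Reals.
From mathcomp Require Import Rstruct.

(* The pullback of a polynomially bounded 1-cocycle [psi] on [H] along [phi]
   is a polynomially bounded 1-cocycle on [G]: cocycles pull back because
   [phi] commutes with the faces, and since [L_H (phi g) <= p (L_G g)] a
   bound [C (1 + L_H)^k] becomes a bound [C M^k (1 + L_G)^(m k)].  Pushing
   forward preserves pairings, so two 1-cycles of [G] pairing alike with
   all such cocycles have images pairing alike with all polynomially
   bounded cocycles of [H]; injectivity of [alpha_1(H)] makes the images
   homologous and injectivity of [phi_1] makes the cycles homologous. *)

Set Implicit Arguments.
Unset Strict Implicit.
Unset Printing Implicit Defensive.
Import Order.TTheory GRing.Theory Num.Theory.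
Local Open Scope ring_scope.

Section Pairing.
Variable G : groupType.

Lemma coef_cons (p : rat * seq G) (c : chain G) h :
  coef (p :: c) h = (if p.2 == h then p.1 else 0) + coef c h.
Proof. by rewrite /coef big_cons; case: ifP; rewrite ?add0r. Qed.

Lemma pair_coef (psi : cochain G) (c : chain G) (s : seq (seq G)) :
  uniq s -> {subset unzip2 c <= s} ->
  pair psi c = \sum_(h <- s) coef c h * psi h.
Proof.
move=> s_uniq; elim: c => [|p c IHc] c_sub.
  by rewrite /pair big_nil big1 // => h _; rewrite /coef big_nil mul0r.
have p_s : p.2 \in s by apply: c_sub; rewrite inE eqxx.
rewrite /pair big_cons -/(pair psi c) IHc => [|h hc]; last first.
  by apply: c_sub; rewrite inE hc orbT.
under [RHS]eq_bigr do rewrite coef_cons mulrDl.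
rewrite big_split /=; congr (_ + _).
rewrite (bigD1_seq p.2) //= eqxx big1 ?addr0 // => h h_neq.
by rewrite eq_sym (negbTE h_neq) mul0r.
Qed.

Lemma pair_chain_eq (psi : cochain G) (c d : chain G) :
  chain_eq c d -> pair psi c = pair psi d.
Proof.
move=> cd; set s := undup (unzip2 c ++ unzip2 d).
have s_uniq : uniq s by exact: undup_uniq.
rewrite (@pair_coef _ c s) // => [|h hc]; last by rewrite mem_undup mem_cat hc.
rewrite (@pair_coef _ d s) // => [|h hd]; last by rewrite mem_undup mem_cat hd orbT.
by apply: eq_bigr => h _; rewrite cd.
Qed.

End Pairing.

Lemma pair_chain_map (G H : groupType) (phi : G -> H) (psi : cochain H) c :
  pair psi (chain_map phi c) = pair (fun h => psi (map phi h)) c.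
Proof. by rewrite /pair /chain_map big_map. Qed.

Lemma coef_chain_map (G H : groupType) (phi : G -> H) c h' :
  coef (chain_map phi c) h' = pair (fun h => (map phi h == h')%:R) c.
Proof.
rewrite /coef /pair /chain_map big_map big_mkcond /=.
by apply: eq_bigr => p _; case: eqP; rewrite ?mulr1 ?mulr0.
Qed.

Section GroupHom.
Variables (G H : groupType) (phi : G -> H).
Hypothesis phiM : group_hom phi.

Lemma group_hom1 : phi 1%g = 1%g.
Proof. by apply: (@mulgI _ (phi 1%g)); rewrite -phiM !mulg1. Qed.

Lemma group_homV x : phi x^-1%g = (phi x)^-1%g.
Proof. by apply: (@mulgI _ (phi x)); rewrite -phiM !mulgV group_hom1. Qed.

Lemma face_map i h : face i (map phi h) = map phi (face i h).
Proof.
case: i => [|i] /=; last by rewrite map_cat map_take map_drop.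
case: h => [|h1 t] //=; rewrite -!map_comp; apply: (eq_map _ t) => x /=.
by rewrite phiM group_homV.
Qed.

Lemma faces_map (a : rat) h r :
  [seq (q.1, map phi q.2) | q <- [seq ((-1) ^+ i * a, face i h) | i <- r]] =
  [seq ((-1) ^+ i * a, face i (map phi h)) | i <- r].
Proof. by elim: r => //= i r ->; rewrite face_map. Qed.

Lemma bd_chain_map c : bd (chain_map phi c) = chain_map phi (bd c).
Proof.
rewrite /bd /chain_map map_flatten; congr flatten.
elim: c => [|p c IHc] //; rewrite map_cons map_cons map_cons IHc size_map.
by congr (_ :: _); rewrite faces_map.
Qed.

Lemma is_cycle_chain_map n c : is_cycle n c -> is_cycle n (chain_map phi c).
Proof.
case=> c_chain c_closed; split.
  by rewrite /is_chain all_map; apply: sub_all c_chain => p; rewrite /= size_map.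
move=> h; rewrite bd_chain_map coef_chain_map (pair_chain_eq _ c_closed).
by rewrite /pair /coef !big_nil.
Qed.

Lemma is_cocycle_comp n (psi : cochain H) :
  is_cocycle n psi -> is_cocycle n (fun h => psi (map phi h)).
Proof.
move=> psi_cocycle h h_size; rewrite -pair_chain_map -bd_chain_map.
by apply: psi_cocycle; rewrite size_map.
Qed.

End GroupHom.

Lemma horner_le_power (p : {poly R}) : exists (M : R) (m : nat),
  0 <= M /\ forall x : R, 0 <= x -> 1 + p.[x] <= M * (1 + x) ^+ m.
Proof.
exists (1 + \sum_(i < size p) `|p`_i|), (size p); split.
  by rewrite addr_ge0 // sumr_ge0.
move=> x x_ge0; have x1_ge1 : 1 <= 1 + x by rewrite lerDl.
rewrite mulrDl mul1r lerD ?exprn_ege1 //.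
rewrite horner_coef mulr_suml; apply: ler_sum => i _.
apply: le_trans (ler_norm _) _; rewrite normrM normrX (ger0_norm x_ge0).
apply: ler_wpM2l => //; apply: (@le_trans _ _ ((1 + x) ^+ i)).
  by apply: lerXn2r; rewrite ?nnegrE ?lerDr // (le_trans _ x1_ge1).
exact: ler_weXn2l (ltnW _).
Qed.

Lemma poly_bounded1_comp (G H : groupType) (LG : G -> R) (LH : H -> R)
    (phi : G -> H) (psi : cochain H) :
  word_length LG -> word_length LH -> p_bounded LG LH phi ->
  poly_bounded LH 1 psi -> poly_bounded LG 1 (fun h => psi (map phi h)).
Proof.
move=> [LG_ge0 _ _ _] [LH_ge0 LH1 _ _] [p phi_p] [C [k psi_C]].
have [M [m [M_ge0 p_M]]] := horner_le_power p.
have C_ge0 : 0 <= C.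
  move: (psi_C [:: 1%g] erefl); rewrite big_seq1 LH1 addr0 expr1n mulr1.
  exact: le_trans (normr_ge0 _).
exists (C * M ^+ k), (m * k)%N => -[|g []] //= _; rewrite big_seq1.
apply: le_trans (psi_C [:: phi g] erefl) _; rewrite big_seq1 -mulrA.
apply: ler_wpM2l => //; rewrite exprM -exprMn.
apply: lerXn2r; rewrite ?nnegrE ?addr_ge0 ?mulr_ge0 ?exprn_ge0 ?addr_ge0 //.
by apply: le_trans (p_M _ (LG_ge0 g)); rewrite lerD2l.
Qed.

Theorem lemma1p4p3 (G H : groupType) (LG : G -> R) (LH : H -> R)
    (phi : G -> H) :
  word_length LG -> word_length LH ->
  group_hom phi -> p_bounded LG LH phi ->
  induced_injective phi 1 ->
  alpha_injective LH 1 ->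
  alpha_injective LG 1.
Proof.
move=> LG_wl LH_wl phiM phi_p phi_inj alphaH c d c_cycle d_cycle pair_cd.
apply: (phi_inj c d) => //.
apply: alphaH; [exact: is_cycle_chain_map c_cycle | exact: is_cycle_chain_map d_cycle |].
move=> psi psi_cocycle psi_bounded; rewrite !pair_chain_map.
apply: pair_cd; first exact: is_cocycle_comp psi_cocycle.
exact: poly_bounded1_comp psi_bounded.
Qed.
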